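(* Let $c\in[\frac12,1)$ and let $d,\delta$ be positive integers with $d\ge\delta$. Let $G$ be a graph with maximum degree $\delta$ and $w:V(G)\to[0,1]$ a weight function with $w(V(G))=1$, and assume $G$ has no $d$-bounded $(w,c)$-balanced separator. Fix a bijection $\mathcal{O}:V(G)\to\{1,\dots,|V(G)|\}$. Let $x,y\in V(G)$ be non-adjacent and incomparable with respect to $\le_A$. Then $S_x$ and $S_y$ are loosely non-crossing, i.e. $A_x\cap C_y=\emptyset$ and $A_y\cap C_x=\emptyset$.
   Context: For $X\subseteq V(G)$, $w(X)=\sum_{x\in X}w(x)$; $N[v]=N(v)\cup\{v\}$; $N^d[v]$ is the set of vertices at distance at most $d$ from $v$. A set $X$ is $d$-bounded if $X\subseteq N^d[v]$ for some $v$. $X$ is a $(w,c)$-balanced separator if every connected component $D$ of $G\setminus X$ has $w(D)\le c$. For $v\in V(G)$, the canonical star separation $S_v=(A_v,C_v,B_v)$ is: $B_v$ the (under these assumptions unique) largest-weight connected component of $G\setminus N[v]$, $C_v$ the set consisting of $v$ and every vertex of $N(v)$ with a neighbor in $B_v$, and $A_v=V(G)\setminus(B_v\cup C_v)$. Two vertices $u,v$ are star twins if $B_u=B_v$, $C_u\setminus\{u\}=C_v\setminus\{v\}$ and $A_u\setminus\{v\}=A_v\setminus\{u\}$. The relation $\le_A$ is defined by: $x\le_A y$ if $x=y$, or $x,y$ are star twins and $\mathcal{O}(x)<\mathcal{O}(y)$, or $x,y$ are not star twins and $y\in A_x$. *)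

From HB Require Import structures.
From mathcomp Require Import all_boot all_order all_algebra.
Set Implicit Arguments. Unset Strict Implicit. Unset Printing Implicit Defensive.
Import Order.TTheory GRing.Theory Num.Theory.
Local Open Scope ring_scope.

(* A finite simple graph: vertex type T : finType, adjacency e : rel T,
   assumed symmetric and irreflexive in the theorem. *)
Section StarSep.
Variables (T : finType) (e : rel T).

Definition nbhd (v : T) : {set T} := [set u | e v u].
Definition cnbhd (v : T) : {set T} := v |: nbhd v.
Definition degree (v : T) : nat := #|nbhd v|.

Fixpoint ball (k : nat) (v : T) : {set T} :=
  match k with
  | 0 => [set v]
  | k'.+1 => ball k' v :|: [set u | [exists x in ball k' v, e x u]]
  end.

Definition bounded (d : nat) (X : {set T}) : Prop := exists v, X \subset ball d v.

Definition del_rel (X : {set T}) : rel T :=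
  [rel a b | [&& e a b, a \notin X & b \notin X]].

(* the connected component of G \ X containing u (for u \notin X) *)
Definition comp (X : {set T}) (u : T) : {set T} :=
  [set v | connect (del_rel X) u v].

Definition comps (X : {set T}) : {set {set T}} :=
  [set D | [exists u, (u \notin X) && (D == comp X u)]].

Variables (R : realFieldType) (w : T -> R).

Definition wt (X : {set T}) : R := \sum_(x in X) w x.

Definition balanced_sep (c : R) (X : {set T}) : Prop :=
  forall D, D \in comps X -> wt D <= c.

(* B_v : a largest-weight component of G \ N[v] (unique under the assumptions) *)
Definition Bv (v : T) : {set T} :=
  odflt set0 [pick D | (D \in comps (cnbhd v)) &&
                       [forall D', (D' \in comps (cnbhd v)) ==> (wt D' <= wt D)]].

Definition Cv (v : T) : {set T} :=
  v |: [set u in nbhd v | [exists b in Bv v, e u b]].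

Definition Av (v : T) : {set T} := ~: (Bv v :|: Cv v).

Definition star_twins (u v : T) : bool :=
  [&& Bv u == Bv v, Cv u :\ u == Cv v :\ v & Av u :\ v == Av v :\ u].

Variable O : T -> nat.

Definition leA (x y : T) : bool :=
  [|| x == y, star_twins x y && (O x < O y)%N | ~~ star_twins x y && (y \in Av x)].

End StarSep.

From HB Require Import structures.
From mathcomp Require Import all_boot all_order all_algebra.
Import Order.TTheory GRing.Theory Num.Theory.
Local Open Scope ring_scope.
Set Implicit Arguments. Unset Strict Implicit.

(* Incomparable vertices are not star twins (O breaks ties between twins),
   so y lies outside A_x; being neither x nor a neighbour of x, it lies in
   the component B_x. Every neighbour of y is then either outside N[x], hence
   in B_x, or in N[x] with the neighbour y in B_x, hence in C_x. So N[y],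
   and a fortiori C_y, misses A_x; symmetrically C_x misses A_y. *)

Lemma del_connect_notin (T : finType) (e : rel T) (X : {set T}) u v :
  connect (del_rel e X) u v -> u \notin X -> v \notin X.
Proof.
case/connectP => p; elim: p u => [|a p IHp] u /= => [_ -> //|].
by case/andP => /and3P [_ _ aX] pth vE _; exact: IHp pth vE aX.
Qed.

Lemma comps_closed (T : finType) (e : rel T) (X D : {set T}) v z :
  D \in comps e X -> v \in D -> e v z -> z \notin X -> z \in D.
Proof.
rewrite inE => /existsP [u /andP [uX /eqP ->]]; rewrite !inE => cuv evz zX.
apply: (connect_trans cuv); apply: connect1.
by rewrite /del_rel /= evz zX (del_connect_notin cuv uX).
Qed.

Section StarSeparation.
Variables (T : finType) (e : rel T) (R : realFieldType) (w : T -> R).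
Hypothesis sym_e : symmetric e.

Lemma Bv_comps x y : y \in Bv e w x -> Bv e w x \in comps e (cnbhd e x).
Proof. by rewrite /Bv; case: pickP => [D /andP [] | _] //=; rewrite inE. Qed.

Lemma Bv_closed x y z :
  y \in Bv e w x -> e y z -> z \notin cnbhd e x -> z \in Bv e w x.
Proof. by move=> yB; apply: comps_closed (Bv_comps yB) yB. Qed.

Lemma Cv_sub_cnbhd y : Cv e w y \subset cnbhd e y.
Proof.
apply/subsetP => z; rewrite /Cv /cnbhd !inE.
by case/predU1P => [-> | /andP [ ]]; rewrite ?eqxx // => ->; rewrite orbT.
Qed.

Lemma notin_Av_Bv x y :
  x != y -> ~~ e x y -> y \notin Av e w x -> y \in Bv e w x.
Proof.
move=> nxy nexy; rewrite /Av in_setC in_setU negbK => /orP [// | ].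
by rewrite /Cv /nbhd !inE eq_sym (negbTE nxy) (negbTE nexy).
Qed.

Lemma disjoint_cnbhd_Av x y : y \in Bv e w x -> [disjoint cnbhd e y & Av e w x].
Proof.
move=> yB; rewrite disjoints_subset /Av setCK; apply/subsetP => z.
rewrite /cnbhd /nbhd !inE => /predU1P [-> | eyz]; first by rewrite yB.
have [zNx | zNx] := boolP (z \in cnbhd e x); last by rewrite (Bv_closed yB eyz zNx).
apply/orP; right; move: zNx; rewrite /Cv /cnbhd /nbhd !inE.
case/predU1P => [-> | exz]; first by rewrite eqxx.
by apply/predU1P; right; rewrite exz; apply/existsP; exists y; rewrite yB sym_e.
Qed.

Lemma Av_Cv_set0 x y :
  x != y -> ~~ e x y -> y \notin Av e w x -> Av e w x :&: Cv e w y = set0.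
Proof.
move=> nxy nexy /(notin_Av_Bv nxy nexy) yB.
apply: disjoint_setI0; rewrite disjoint_sym.
exact: disjointWl (Cv_sub_cnbhd y) (disjoint_cnbhd_Av yB).
Qed.

Lemma star_twinsC x y : star_twins e w x y = star_twins e w y x.
Proof. by apply/and3P/and3P => -[? ? ?]; split; rewrite eq_sym. Qed.

Variable O : T -> nat.

Lemma star_twins_leA x y : injective O -> x != y -> star_twins e w x y ->
  leA e w O x y || leA e w O y x.
Proof.
move=> injO nxy st; rewrite /leA (star_twinsC y x) st /=.
case: ltngtP => [|_|/injO xy]; rewrite ?orbT //.
by rewrite xy eqxx in nxy.
Qed.

Lemma notin_Av_leA x y :
  ~~ star_twins e w x y -> ~~ leA e w O x y -> y \notin Av e w x.
Proof. by move=> nst; apply: contraNN => yA; apply/or3P/Or33/andP. Qed.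

End StarSeparation.

Theorem lemma4p4 (R : realFieldType) (c : R) (d delta : nat)
  (T : finType) (e : rel T) (w : T -> R) (O : T -> nat) (x y : T) :
  1 / 2 <= c -> c < 1 ->
  (0 < delta)%N -> (0 < d)%N -> (delta <= d)%N ->
  symmetric e -> irreflexive e ->
  (forall v, (degree e v <= delta)%N) -> (exists v, degree e v = delta) ->
  (forall v, 0 <= w v <= 1) -> wt w [set: T] = 1 ->
  (forall X : {set T}, bounded e d X -> ~ balanced_sep e w c X) ->
  injective O -> (forall v, (1 <= O v <= #|T|)%N) ->
  ~~ e x y ->
  ~~ leA e w O x y -> ~~ leA e w O y x ->
  Av e w x :&: Cv e w y = set0 /\ Av e w y :&: Cv e w x = set0.
Proof.
move=> _ _ _ _ _ sym_e _ _ _ _ _ _ injO _ nexy nleAxy nleAyx.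
have nxy : x != y by apply: contraNneq nleAxy => ->; rewrite /leA eqxx.
have nst : ~~ star_twins e w x y.
  apply/negP => /(star_twins_leA injO nxy) /orP [] ?.
  - by case/negP: nleAxy.
  - by case/negP: nleAyx.
have yAx := notin_Av_leA nst nleAxy.
have xAy : x \notin Av e w y by apply: notin_Av_leA nleAyx; rewrite star_twinsC.
split; first exact: Av_Cv_set0 nxy nexy yAx.
have nyx : y != x by rewrite eq_sym.
have neyx : ~~ e y x by rewrite sym_e.
exact: Av_Cv_set0 nyx neyx xAy.
Qed.
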